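(* With the notation $\epsilon\in(0,4)$, $\mathcal{H}_\epsilon=\ell^2(\epsilon+4\mathbb{Z})$, $B(v)=\tfrac{27}{8}|v|\,\big||v+1|^{1/3}-|v-1|^{1/3}\big|^3$, $\tilde A(v)=|v|\,\big||v+1|-|v-1|\big|$, $(D\psi)(v)=\psi(v+2)-\psi(v-2)$ and $\hat\rho_2=-\tfrac{\rho_c}{8}B(\hat v)^{1/2}D\,\tilde A(\hat v)\,D\,B(\hat v)^{1/2}$: if $\psi\in\mathcal{H}_\epsilon$ is a normalizable eigenvector of $\hat\rho_2$ with eigenvalue $\lambda>\rho_c$, then $\psi$ decays exponentially, i.e. there exist $C,\kappa>0$ (with $\kappa$ depending only on $\lambda$ and increasing with $\lambda$) such that $|\psi(v)|\le C e^{-\kappa|v|}$ for all $v\in\epsilon+4\mathbb{Z}$. For $0\le\lambda<\rho_c$, by contrast, every solution of the eigenvalue equation is asymptotically, for large $|v|$, a bounded superposition of oscillating exponentials $\alpha e^{ikv}+\alpha' e^{-ikv}$ plus a bounded remainder decaying like $1/|v|$, where $k\in\mathbb{R}$ is determined by $\lambda$. *)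

From Stdlib Require Import Reals Lra ZArith.
Open Scope R_scope.

Definition Cx : Type := (R * R)%type.
Definition C0 : Cx := (0, 0).
Definition Cadd (z w : Cx) : Cx := (fst z + fst w, snd z + snd w).
Definition Csub (z w : Cx) : Cx := (fst z - fst w, snd z - snd w).
Definition Cmul (z w : Cx) : Cx :=
  (fst z * fst w - snd z * snd w, fst z * snd w + snd z * fst w).
Definition Cscale (r : R) (z : Cx) : Cx := (r * fst z, r * snd z).
Definition Cmod (z : Cx) : R := sqrt (fst z ^ 2 + snd z ^ 2).
Definition Cexpi (t : R) : Cx := (cos t, sin t).

(* |x|^{1/3}, with 0^{1/3} = 0 (Rpower 0 y is 1 in Stdlib, hence the case split) *)
Definition cbrt_abs (x : R) : R :=
  match Rlt_dec 0 (Rabs x) with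
  | left _ => Rpower (Rabs x) (1/3)
  | right _ => 0
  end.

Definition Bfun (v : R) : R :=
  27/8 * Rabs v * (Rabs (cbrt_abs (v + 1) - cbrt_abs (v - 1))) ^ 3.

Definition Atil (v : R) : R := Rabs v * Rabs (Rabs (v + 1) - Rabs (v - 1)).

Definition Dop (f : R -> Cx) (v : R) : Cx := Csub (f (v + 2)) (f (v - 2)).

(* rho_2 = -(rho_c/8) B^{1/2} D A~ D B^{1/2}, acting on functions of v;
   only the values of psi on the lattice eps+4Z matter when evaluated on it. *)
Definition rho2 (rc : R) (psi : R -> Cx) (v : R) : Cx :=
  Cscale (- (rc / 8) * sqrt (Bfun v))
    (Dop (fun w => Cscale (Atil w)
            (Dop (fun u => Cscale (sqrt (Bfun u)) (psi u)) w)) v).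

Definition vpt (eps : R) (n : Z) : R := eps + 4 * IZR n.

Definition eigen_eq (rc eps lam : R) (psi : R -> Cx) : Prop :=
  forall n : Z, rho2 rc psi (vpt eps n) = Cscale lam (psi (vpt eps n)).

(* psi restricted to eps+4Z lies in l^2(eps+4Z): the symmetric partial sums
   sum_{|n|<=N} |psi(eps+4n)|^2 are bounded (nonnegative terms). *)
Definition in_l2 (eps : R) (psi : R -> Cx) : Prop :=
  exists M : R, forall N : nat,
    sum_f_R0 (fun j => Cmod (psi (vpt eps (Z.of_nat j - Z.of_nat N)%Z)) ^ 2)
      (2 * N) <= M.

Definition nonzero_on (eps : R) (psi : R -> Cx) : Prop :=
  exists n : Z, psi (vpt eps n) <> C0.

(* On the lattice eps + 4Z the operator rho_2 is a Jacobi operator: an eigenfunction satisfies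
   a(v) psi(v+4) + (g(v) - lam) psi(v) + a(v-4) psi(v-4) = 0, and v B(v) = 1 + O(1/v^2) gives
   a(v) = -rho_c/4 + O(1/v^2) and g(v) = rho_c/2 + O(1/v^2).  The limiting recurrence has
   characteristic equation cos theta = 1 - 2 lam / rho_c.

   For lam > rho_c, |psi| is a subsolution of the recurrence with these coefficients, and far
   out a maximum principle compares it with a geometric sequence of ratio rho_c / lam; since
   square summability forces psi to vanish at infinity, |psi| decays at least like that.

   For lam < rho_c, theta is real and the recurrence is a perturbation of the Chebyshev
   recurrence by terms of size O(1/v^2).  Variation of constants writes each solution as
   X_n cos (n theta) + Y_n sin (n theta) with increments of X_n, Y_n bounded by a telescoping
   O(1/n^2); hence X_n, Y_n converge at rate O(1/n), which is the claimed asymptotics with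
   k = theta / 4. *)

From Stdlib Require Import Reals ZArith Lra Lia Psatz.
From Coquelicot Require Complex.
Open Scope R_scope.

Lemma Rabs_le_bounds (a b : R) : Rabs a <= b -> - b <= a <= b.
Proof. unfold Rabs. destruct (Rcase_abs a); lra. Qed.

Lemma Rabs_div_le (x y c d : R) : 0 < d -> d <= Rabs y -> Rabs x <= c -> Rabs (x / y) <= c / d.
Proof.
  intros hd hy hx. unfold Rdiv. rewrite Rabs_mult, Rabs_inv.
  apply Rmult_le_compat; auto using Rabs_pos.
  - apply Rlt_le, Rinv_0_lt_compat; lra.
  - apply Rinv_le_contravar; lra.
Qed.

Lemma inv_sqr_le (v w : R) : 0 < v <= w -> 1 / w^2 <= 1 / v^2.
Proof.
  intro h. unfold Rdiv. rewrite !Rmult_1_l. apply Rinv_le_contravar; nra.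
Qed.

Lemma sqrt_near1 (x : R) : 0 <= x -> Rabs (sqrt x - 1) <= Rabs (x - 1).
Proof.
  intro hx. pose proof (sqrt_pos x). pose proof (sqrt_sqrt x hx).
  replace (x - 1) with ((sqrt x - 1) * (sqrt x + 1)) by nra.
  rewrite Rabs_mult, (Rabs_right (sqrt x + 1)) by lra.
  pose proof (Rabs_pos (sqrt x - 1)). nra.
Qed.

Lemma near1_mul3 (x1 x2 r e : R) : 0 <= e <= 3/64 ->
  Rabs (x1 - 1) <= e -> Rabs (x2 - 1) <= e -> 1 <= r <= 1 + 4/3 * e ->
  Rabs (x1 * x2 * r - 1) <= 4 * e.
Proof.
  intros he h1 h2 hr. apply Rabs_le_bounds in h1. apply Rabs_le_bounds in h2.
  assert ((1 - e) * (1 - e) <= x1 * x2 <= (1 + e) * (1 + e))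
    by (split; apply Rmult_le_compat; lra).
  apply Rabs_le; split.
  - assert (x1 * x2 * 1 <= x1 * x2 * r) by (apply Rmult_le_compat_l; nra). nra.
  - assert (x1 * x2 * r <= (1 + e) * (1 + e) * (1 + 4/3 * e))
      by (apply Rmult_le_compat; nra). nra.
Qed.

Lemma exp_le_mono (x y : R) : x <= y -> exp x <= exp y.
Proof. intros [h|<-]; [left; apply exp_increasing|]; lra. Qed.

Lemma ratio_in_unit (x y : R) : 0 < x < y -> 0 < x / y < 1.
Proof.
  intro h. split; [apply Rdiv_lt_0_compat; lra|].
  apply (Rmult_lt_reg_r y); [lra|]. unfold Rdiv. rewrite Rmult_assoc, Rinv_l by lra. lra.
Qed.

Lemma ratio_gt1 (x y : R) : 0 < y < x -> 1 < x / y.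
Proof.
  intro h. apply (Rmult_lt_reg_r y); [lra|]. unfold Rdiv. rewrite Rmult_assoc, Rinv_l by lra. lra.
Qed.

Lemma nat_above (x : R) : exists N : nat, x < INR N.
Proof.
  destruct (archimed (Rabs x)) as [h _].
  assert (hup : (0 < up (Rabs x))%Z) by (apply lt_IZR; pose proof (Rabs_pos x); lra).
  exists (Z.to_nat (up (Rabs x))). rewrite INR_IZR_INZ, Z2Nat.id by lia.
  pose proof (Rle_abs x). lra.
Qed.

Lemma Un_cv_dist_le (U : nat -> R) (l x c : R) (n : nat) :
  Un_cv U l -> (forall m, (n <= m)%nat -> Rabs (U m - x) <= c) -> Rabs (l - x) <= c.
Proof.
  intros hcv hb. destruct (Rle_lt_dec (Rabs (l - x)) c) as [|h]; auto. exfalso.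
  destruct (hcv (Rabs (l - x) - c)) as [N hN]; [lra|].
  specialize (hN (max N n) ltac:(lia)). specialize (hb (max N n) ltac:(lia)).
  unfold R_dist in hN. rewrite Rabs_minus_sym in hN.
  pose proof (Rabs_triang (l - U (max N n)) (U (max N n) - x)) as ht.
  replace (l - U (max N n) + (U (max N n) - x)) with (l - x) in ht by ring. lra.
Qed.

Lemma trig_comb_bound (x y c s : R) : Rabs c <= 1 -> Rabs s <= 1 ->
  Rabs (x * c + y * s) <= Rabs x + Rabs y.
Proof.
  intros hc hs. eapply Rle_trans; [apply Rabs_triang|]. rewrite !Rabs_mult.
  pose proof (Rabs_pos x). pose proof (Rabs_pos y). nra.
Qed.

Lemma Rabs_cos_le1 (x : R) : Rabs (cos x) <= 1.
Proof. apply Rabs_le, COS_bound. Qed.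

Lemma Rabs_sin_le1 (x : R) : Rabs (sin x) <= 1.
Proof. apply Rabs_le, SIN_bound. Qed.

Lemma sin_sum_diff (x y : R) : sin (x + y) + sin (x - y) = 2 * sin x * cos y.
Proof. rewrite sin_plus, sin_minus. ring. Qed.

Lemma cos_sum_diff (x y : R) : cos (x + y) + cos (x - y) = 2 * cos x * cos y.
Proof. rewrite cos_plus, cos_minus. ring. Qed.

Lemma cos_sin_shift (X Y t ph : R) :
  X * cos (t - ph) + Y * sin (t - ph) =
  (X * cos ph - Y * sin ph) * cos t + (X * sin ph + Y * cos ph) * sin t.
Proof. rewrite cos_minus, sin_minus. ring. Qed.

Lemma Cmod_ge0 (z : Cx) : 0 <= Cmod z.
Proof. apply sqrt_pos. Qed.

Lemma Cmod_le_abs_sum (z : Cx) : Cmod z <= Rabs (fst z) + Rabs (snd z).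
Proof.
  unfold Cmod. destruct z as [x y]. cbn [fst snd].
  pose proof (Rabs_pos x). pose proof (Rabs_pos y).
  rewrite <- (sqrt_pow2 (Rabs x + Rabs y)) by lra. apply sqrt_le_1_alt.
  rewrite <- (pow2_abs x), <- (pow2_abs y). nra.
Qed.

Lemma Cmod_Cscale (r : R) (z : Cx) : Cmod (Cscale r z) = Rabs r * Cmod z.
Proof.
  unfold Cmod, Cscale. destruct z as [x y]. cbn [fst snd].
  replace ((r * x)^2 + (r * y)^2) with (r^2 * (x^2 + y^2)) by ring.
  rewrite sqrt_mult_alt by nra. rewrite <- (sqrt_pow2 (Rabs r)) by apply Rabs_pos.
  rewrite pow2_abs. reflexivity.
Qed.

Lemma Cmod_lin_comb_le (z z1 z2 : Cx) (r r1 r2 : R) :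
  r * fst z = r1 * fst z1 + r2 * fst z2 -> r * snd z = r1 * snd z1 + r2 * snd z2 ->
  Rabs r * Cmod z <= Rabs r1 * Cmod z1 + Rabs r2 * Cmod z2.
Proof.
  intros h1 h2. rewrite <- !Cmod_Cscale.
  replace (Cscale r z) with (Cadd (Cscale r1 z1) (Cscale r2 z2))
    by (unfold Cscale, Cadd; cbn [fst snd]; rewrite h1, h2; reflexivity).
  (* [Cx] and [Cmod] are convertible to Coquelicot's [C] and [Cmod]. *)
  exact (Complex.Cmod_triangle _ _).
Qed.

Lemma Cadd_comm (z w : Cx) : Cadd z w = Cadd w z.
Proof. unfold Cadd. f_equal; ring. Qed.

Definition amp_plus (P Q R S : R) : Cx := ((P + S)/2, (R - Q)/2).
Definition amp_minus (P Q R S : R) : Cx := ((P - S)/2, (R + Q)/2).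

Lemma cexpi_pair_expansion (P Q R S t : R) :
  Cadd (Cmul (amp_plus P Q R S) (Cexpi t)) (Cmul (amp_minus P Q R S) (Cexpi (- t)))
  = (P * cos t + Q * sin t, R * cos t + S * sin t).
Proof.
  unfold Cadd, Cmul, amp_plus, amp_minus, Cexpi. cbn [fst snd].
  rewrite cos_neg, sin_neg. f_equal; field.
Qed.

Lemma Cmod_sub_cexpi_pair (z : Cx) (P Q R S t c1 c2 : R) :
  Rabs (fst z - (P * cos t + Q * sin t)) <= c1 ->
  Rabs (snd z - (R * cos t + S * sin t)) <= c2 ->
  Cmod (Csub z (Cadd (Cmul (amp_plus P Q R S) (Cexpi t))
                     (Cmul (amp_minus P Q R S) (Cexpi (- t))))) <= c1 + c2.
Proof.
  intros h1 h2. rewrite cexpi_pair_expansion.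
  eapply Rle_trans; [apply Cmod_le_abs_sum|]. unfold Csub. cbn [fst snd]. lra.
Qed.

(** * Asymptotics of the coefficients *)

Lemma cube_gap_identity (a b : R) :
  64 * ((a*a + a*b + b*b)^3 - 27 * ((a^3 + b^3)/2)^2) =
  -135 * ((a+b)^4 * (a-b)^2) - 234 * ((a+b)^2 * (a-b)^4) + (a-b)^6.
Proof. field. Qed.

Lemma cube_sum_near_Q_cube (a b : R) : a^3 - b^3 = 2 -> 1 <= b <= a ->
  Rabs ((a*a + a*b + b*b)^3 - 27 * ((a^3 + b^3)/2)^2) <= 18.
Proof.
  intros h2 [hb1 hab].
  set (d := a - b). set (Q := a*a + a*b + b*b).
  assert (hdQ : d * Q = 2)
    by (unfold d, Q; replace ((a - b) * (a*a + a*b + b*b)) with (a^3 - b^3) by ring; lra).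
  assert (hQ3 : 3 <= Q) by (unfold Q; nra).
  assert (hd : 0 <= d <= 2/3) by (split; [unfold d; lra|nra]).
  assert (hpQ : (a + b)^2 <= 4/3 * Q) by (unfold Q; nra).
  assert (hpd : (a + b)^2 * d^2 <= 16/9) by nra.
  assert (hp4d : (a + b)^4 * d^2 <= 64/9).
  { assert ((a + b)^4 * d^2 <= (4/3 * Q)^2 * d^2); [|nra].
    replace ((a + b)^4) with (((a + b)^2)^2) by ring.
    apply Rmult_le_compat_r; [nra|]. apply pow_incr. nra. }
  assert (hd6 : 0 <= d^6 <= 1)
    by (split; [apply pow_le; lra|]; assert (d^6 <= (2/3)^6) by (apply pow_incr; lra); lra).
  assert (0 <= (a + b)^2 * d^4 <= 16/9 * (4/9)).
  { replace ((a + b)^2 * d^4) with ((a + b)^2 * d^2 * d^2) by ring.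
    split; [apply Rmult_le_pos; nra|nra]. }
  assert (0 <= (a + b)^4 * d^2)
    by (replace ((a + b)^4) with (((a + b)^2)^2) by ring; apply Rmult_le_pos; nra).
  pose proof (cube_gap_identity a b) as e. fold Q d in e.
  apply Rabs_le. split; nra.
Qed.

(* With Q = a^2 + a b + b^2 one has a - b = 2 / Q, so the quantity below is 27 v^2 / Q^3 - 1. *)
Lemma cube_root_gap (a b v : R) :
  a^3 = v + 1 -> b^3 = v - 1 -> 1 <= b <= a ->
  Rabs (v * (27/8 * v * (a - b)^3) - 1) <= 3 / v^2.
Proof.
  intros ha hb hba.
  pose proof (cube_sum_near_Q_cube a b ltac:(lra) hba) as hgap.
  replace ((a^3 + b^3)/2) with v in hgap by lra.
  set (Q := a*a + a*b + b*b) in *.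
  assert (hQb : 3 * (b*b) <= Q) by (unfold Q; nra).
  assert (ed : a - b = 2 / Q)
    by (unfold Q; field_simplify_eq; [replace (b^3) with (v - 1); nra|nra]).
  assert (hv1 : 1 <= v - 1) by (rewrite <- hb, <- (pow1 3); apply pow_incr; lra).
  assert (hQv : 27 * v^2 / 4 <= Q^3).
  { assert ((3 * (b*b))^3 <= Q^3) by (apply pow_incr; nra).
    assert ((b*b)^3 = (v - 1)^2) by (rewrite <- hb; ring). nra. }
  assert (hv2 : 0 < v^2) by nra.
  replace (v * (27/8 * v * (a - b)^3) - 1) with (- ((Q^3 - 27 * v^2) / Q^3))
    by (rewrite ed; field; nra).
  rewrite Rabs_Ropp.
  apply Rle_trans with (18 / (27 * v^2 / 4)).
  - apply Rabs_div_le; [nra|rewrite Rabs_right; nra|exact hgap].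
  - replace (18 / (27 * v^2 / 4)) with (8/3 * (1 / v^2)) by (field; lra).
    replace (3 / v^2) with (3 * (1 / v^2)) by (field; lra).
    assert (0 < 1 / v^2) by (apply Rdiv_lt_0_compat; lra). lra.
Qed.

Lemma cube_le_inv (x y : R) : 0 < x -> 0 < y -> x^3 <= y^3 -> x <= y.
Proof.
  intros hx hy h. destruct (Rle_lt_dec x y) as [|hyx]; auto.
  assert (y * y < x * x) by nra. assert (y^3 < x^3) by nra. lra.
Qed.

Lemma cbrt_abs_cube (x : R) : 0 < x -> 0 < cbrt_abs x /\ cbrt_abs x ^ 3 = x.
Proof.
  intro hx. unfold cbrt_abs. rewrite (Rabs_right x) by lra.
  destruct (Rlt_dec 0 x) as [_|]; [|lra].
  split; [apply exp_pos|].
  rewrite <- Rpower_pow by apply exp_pos.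
  rewrite Rpower_mult. replace (1/3 * INR 3) with 1 by (simpl; field).
  apply Rpower_1; auto.
Qed.

Lemma cbrt_abs_opp (x : R) : cbrt_abs (- x) = cbrt_abs x.
Proof. unfold cbrt_abs. now rewrite Rabs_Ropp. Qed.

Lemma Bfun_even (v : R) : Bfun (- v) = Bfun v.
Proof.
  unfold Bfun. rewrite Rabs_Ropp.
  replace (- v + 1) with (- (v - 1)) by ring. replace (- v - 1) with (- (v + 1)) by ring.
  rewrite !cbrt_abs_opp, <- (Rabs_Ropp (_ - cbrt_abs (v + 1))), Ropp_minus_distr.
  reflexivity.
Qed.

Lemma Atil_even (v : R) : Atil (- v) = Atil v.
Proof.
  unfold Atil. rewrite Rabs_Ropp.
  replace (- v + 1) with (- (v - 1)) by ring. replace (- v - 1) with (- (v + 1)) by ring.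
  rewrite !Rabs_Ropp, <- (Rabs_Ropp (Rabs (v - 1) - _)), Ropp_minus_distr.
  reflexivity.
Qed.

Lemma Atil_ge1 (v : R) : 1 <= v -> Atil v = 2 * v.
Proof.
  intro h. unfold Atil.
  rewrite (Rabs_right v), (Rabs_right (v + 1)), (Rabs_right (v - 1)) by lra.
  replace (v + 1 - (v - 1)) with 2 by ring. rewrite Rabs_right by lra. ring.
Qed.

Lemma Bfun_ge0 (v : R) : 0 <= Bfun v.
Proof.
  unfold Bfun. repeat apply Rmult_le_pos; try apply Rabs_pos; try lra.
Qed.

Lemma vBfun_near1 (v : R) : 2 <= v -> Rabs (v * Bfun v - 1) <= 3 / v^2.
Proof.
  intro hv.
  destruct (cbrt_abs_cube (v + 1)) as [ha ha3]; [lra|].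
  destruct (cbrt_abs_cube (v - 1)) as [hb hb3]; [lra|].
  set (a := cbrt_abs (v + 1)) in *. set (b := cbrt_abs (v - 1)) in *.
  assert (hb1 : 1 <= b) by (apply cube_le_inv; lra).
  assert (hab : b <= a) by (apply cube_le_inv; lra).
  unfold Bfun. fold a b. rewrite (Rabs_right v), (Rabs_right (a - b)) by lra.
  now apply cube_root_gap.
Qed.

Definition jacobi_off (rc v : R) : R :=
  - (rc/8) * sqrt (Bfun v) * Atil (v + 2) * sqrt (Bfun (v + 4)).
Definition jacobi_diag (rc v : R) : R :=
  rc/8 * Bfun v * (Atil (v + 2) + Atil (v - 2)).

Lemma jacobi_diag_near (rc v : R) : 0 <= rc -> 3 <= v ->
  Rabs (jacobi_diag rc v - rc/2) <= 2 * rc / v^2.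
Proof.
  intros hrc hv. unfold jacobi_diag. rewrite !Atil_ge1 by lra.
  replace (rc/8 * Bfun v * (2 * (v + 2) + 2 * (v - 2)) - rc/2)
    with (rc/2 * (v * Bfun v - 1)) by field.
  rewrite Rabs_mult, (Rabs_right (rc/2)) by lra.
  pose proof (vBfun_near1 v ltac:(lra)) as h.
  apply Rle_trans with (rc/2 * (3 / v^2)); [apply Rmult_le_compat_l; lra|].
  assert (0 <= 1 / v^2) by (apply Rlt_le, Rdiv_lt_0_compat; nra).
  unfold Rdiv in *. nra.
Qed.

Lemma jacobi_off_near (rc v : R) : 0 <= rc -> 8 <= v ->
  Rabs (jacobi_off rc v + rc/4) <= 3 * rc / v^2.
Proof.
  intros hrc hv. pose proof (Bfun_ge0 v). pose proof (Bfun_ge0 (v + 4)).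
  set (X := (v * Bfun v) * ((v + 4) * Bfun (v + 4)) * ((v + 2)^2 / (v * (v + 4)))).
  assert (hX0 : 0 <= X).
  { assert (0 <= (v + 2)^2 / (v * (v + 4))) by (apply Rlt_le, Rdiv_lt_0_compat; nra).
    assert (0 <= v * Bfun v) by (apply Rmult_le_pos; lra).
    assert (0 <= (v + 4) * Bfun (v + 4)) by (apply Rmult_le_pos; lra).
    unfold X. apply Rmult_le_pos; [apply Rmult_le_pos|]; assumption. }
  assert (hoff : jacobi_off rc v = - (rc/4) * sqrt X).
  { unfold jacobi_off, X. rewrite Atil_ge1 by lra.
    replace ((v * Bfun v) * ((v + 4) * Bfun (v + 4)) * ((v + 2)^2 / (v * (v + 4))))
      with (Bfun v * Bfun (v + 4) * (v + 2)^2) by (field; lra).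
    rewrite (sqrt_mult_alt (Bfun v * Bfun (v + 4))) by (apply Rmult_le_pos; lra).
    rewrite sqrt_mult_alt, sqrt_pow2 by lra. field. }
  set (e := 3 / v^2).
  assert (he : 0 <= e <= 3/64).
  { pose proof (inv_sqr_le 8 v ltac:(lra)) as h.
    assert (0 < 1 / v^2) by (apply Rdiv_lt_0_compat; nra).
    unfold e. replace (3 / v^2) with (3 * (1 / v^2)) by (field; nra).
    replace (1 / 8^2) with (1/64) in h by field. lra. }
  assert (hX : Rabs (X - 1) <= 4 * e).
  { apply near1_mul3; auto.
    - apply vBfun_near1; lra.
    - eapply Rle_trans; [apply vBfun_near1; lra|].
      unfold e. pose proof (inv_sqr_le v (v + 4) ltac:(lra)). unfold Rdiv in *. lra.
    - replace ((v + 2)^2 / (v * (v + 4))) with (1 + 4 * (1 / (v * (v + 4)))) by (field; lra).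
      assert (0 < 1 / (v * (v + 4)) <= 1 / v^2).
      { split. apply Rdiv_lt_0_compat; nra.
        unfold Rdiv. rewrite !Rmult_1_l. apply Rinv_le_contravar; nra. }
      unfold e. unfold Rdiv in *. split; nra. }
  rewrite hoff. replace (- (rc/4) * sqrt X + rc/4) with (- (rc/4) * (sqrt X - 1)) by ring.
  rewrite Rabs_mult, Rabs_Ropp, (Rabs_right (rc/4)) by lra.
  pose proof (sqrt_near1 X hX0).
  replace (3 * rc / v^2) with (rc/4 * (4 * e)) by (unfold e; field; lra).
  apply Rmult_le_compat_l; lra.
Qed.

Lemma jacobi_off_bounded_away (rc v : R) : 0 < rc -> 8 <= v -> rc/8 <= Rabs (jacobi_off rc v).
Proof.
  intros hrc hv. pose proof (jacobi_off_near rc v ltac:(lra) hv) as h.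
  assert (3 * rc / v^2 <= rc/8).
  { pose proof (inv_sqr_le 8 v ltac:(lra)). unfold Rdiv in *. nra. }
  apply Rabs_le_bounds in h. rewrite Rabs_left by lra. lra.
Qed.

Lemma jacobi_off_neq0 (rc v : R) : 0 < rc -> 8 <= v -> jacobi_off rc v <> 0.
Proof.
  intros hrc hv e. pose proof (jacobi_off_bounded_away rc v hrc hv).
  rewrite e, Rabs_R0 in *. lra.
Qed.

Lemma jacobi_errors_shifted (rc v : R) : 0 <= rc -> 16 <= v ->
  Rabs (jacobi_diag rc v - rc/2) <= 2 * (rc / (v - 4)^2) /\
  Rabs (jacobi_off rc v + rc/4) <= 3 * (rc / (v - 4)^2) /\
  Rabs (jacobi_off rc (v - 4) + rc/4) <= 3 * (rc / (v - 4)^2).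
Proof.
  intros hrc hv. pose proof (inv_sqr_le (v - 4) v ltac:(lra)).
  repeat split.
  - eapply Rle_trans; [apply jacobi_diag_near; lra|]. unfold Rdiv in *. nra.
  - eapply Rle_trans; [apply jacobi_off_near; lra|]. unfold Rdiv in *. nra.
  - eapply Rle_trans; [apply jacobi_off_near; lra|]. unfold Rdiv in *. nra.
Qed.

Lemma diag_ratio_near (rc lam v : R) : 0 < rc -> 0 < lam < rc -> 16 <= v ->
  Rabs ((lam - jacobi_diag rc v) / jacobi_off rc v - 2 * (1 - 2 * lam / rc)) <= 64 / (v - 4)^2.
Proof.
  intros hrc hlam hv.
  destruct (jacobi_errors_shifted rc v ltac:(lra) hv) as [hg [ha _]].
  pose proof (jacobi_off_bounded_away rc v hrc ltac:(lra)).
  pose proof (jacobi_off_neq0 rc v hrc ltac:(lra)).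
  assert (hc : Rabs (1 - 2 * lam / rc) <= 1).
  { apply Rabs_le. pose proof (ratio_in_unit lam rc hlam). unfold Rdiv in *. lra. }
  replace ((lam - jacobi_diag rc v) / jacobi_off rc v - 2 * (1 - 2 * lam / rc))
    with ((- (jacobi_diag rc v - rc/2) - 2 * (1 - 2 * lam / rc) * (jacobi_off rc v + rc/4))
          / jacobi_off rc v) by (field; lra).
  replace (64 / (v - 4)^2) with (8 * (rc / (v - 4)^2) / (rc/8)) by (field; split; lra).
  apply Rabs_div_le; [lra|assumption|].
  eapply Rle_trans; [apply Rabs_triang|].
  rewrite Rabs_Ropp, Rabs_Ropp, !Rabs_mult, (Rabs_right 2) by lra.
  pose proof (Rabs_pos (jacobi_off rc v + rc/4)). pose proof (Rabs_pos (1 - 2 * lam / rc)).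
  assert (Rabs (1 - 2 * lam / rc) * Rabs (jacobi_off rc v + rc/4) <= 1 * (3 * (rc / (v - 4)^2)))
    by (apply Rmult_le_compat; lra).
  lra.
Qed.

Lemma off_ratio_near (rc v : R) : 0 < rc -> 16 <= v ->
  Rabs (1 - jacobi_off rc (v - 4) / jacobi_off rc v) <= 48 / (v - 4)^2.
Proof.
  intros hrc hv.
  destruct (jacobi_errors_shifted rc v ltac:(lra) hv) as [_ [ha ham]].
  pose proof (jacobi_off_bounded_away rc v hrc ltac:(lra)).
  pose proof (jacobi_off_neq0 rc v hrc ltac:(lra)).
  replace (1 - jacobi_off rc (v - 4) / jacobi_off rc v)
    with ((jacobi_off rc v - jacobi_off rc (v - 4)) / jacobi_off rc v) by (field; lra).
  replace (48 / (v - 4)^2) with (6 * (rc / (v - 4)^2) / (rc/8)) by (field; split; lra).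
  apply Rabs_div_le; [lra|assumption|].
  apply Rabs_le_bounds in ha. apply Rabs_le_bounds in ham. apply Rabs_le. lra.
Qed.

(** * The eigenvalue equation as a three-term recurrence *)

Definition jacobi_eq (rc lam : R) (x : R -> R) (v : R) : Prop :=
  jacobi_off rc v * x (v + 4) + (jacobi_diag rc v - lam) * x v
  + jacobi_off rc (v - 4) * x (v - 4) = 0.

Section RealProjection.
Variable pr : Cx -> R.
Hypothesis pr_scale : forall r z, pr (Cscale r z) = r * pr z.
Hypothesis pr_sub : forall z w, pr (Csub z w) = pr z - pr w.

Lemma rho2_proj (rc : R) (psi : R -> Cx) (v : R) :
  pr (rho2 rc psi v) = jacobi_off rc v * pr (psi (v + 4)) + jacobi_diag rc v * pr (psi v)
                       + jacobi_off rc (v - 4) * pr (psi (v - 4)).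
Proof.
  unfold rho2, Dop, jacobi_off, jacobi_diag.
  rewrite !pr_scale, !pr_sub, !pr_scale, !pr_sub, !pr_scale.
  replace (v + 2 + 2) with (v + 4) by ring. replace (v + 2 - 2) with v by ring.
  replace (v - 2 + 2) with v by ring. replace (v - 2 - 2) with (v - 4) by ring.
  replace (v - 4 + 2) with (v - 2) by ring. replace (v - 4 + 4) with v by ring.
  pose proof (sqrt_sqrt _ (Bfun_ge0 v)) as hB.
  set (s := sqrt (Bfun v)) in *. rewrite <- hB. ring.
Qed.

Lemma eigen_eq_jacobi (rc eps lam : R) (psi : R -> Cx) :
  eigen_eq rc eps lam psi -> forall n, jacobi_eq rc lam (fun w => pr (psi w)) (vpt eps n).
Proof.
  intros h n. specialize (h n). apply (f_equal pr) in h.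
  rewrite rho2_proj, pr_scale in h. unfold jacobi_eq. lra.
Qed.
End RealProjection.

Lemma eigen_eq_jacobi_re (rc eps lam : R) (psi : R -> Cx) :
  eigen_eq rc eps lam psi -> forall n, jacobi_eq rc lam (fun w => fst (psi w)) (vpt eps n).
Proof. apply eigen_eq_jacobi; reflexivity. Qed.

Lemma eigen_eq_jacobi_im (rc eps lam : R) (psi : R -> Cx) :
  eigen_eq rc eps lam psi -> forall n, jacobi_eq rc lam (fun w => snd (psi w)) (vpt eps n).
Proof. apply eigen_eq_jacobi; reflexivity. Qed.

Lemma jacobi_off_reflect (rc w : R) : jacobi_off rc (- w) = jacobi_off rc (w - 4).
Proof.
  unfold jacobi_off.
  replace (- w + 2) with (- (w - 2)) by ring. replace (- w + 4) with (- (w - 4)) by ring.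
  rewrite Atil_even, !Bfun_even.
  replace (w - 4 + 2) with (w - 2) by ring. replace (w - 4 + 4) with w by ring. ring.
Qed.

Lemma jacobi_diag_even (rc w : R) : jacobi_diag rc (- w) = jacobi_diag rc w.
Proof.
  unfold jacobi_diag. rewrite Bfun_even.
  replace (- w + 2) with (- (w - 2)) by ring. replace (- w - 2) with (- (w + 2)) by ring.
  rewrite !Atil_even. ring.
Qed.

Lemma jacobi_eq_reflect (rc lam : R) (x : R -> R) (w : R) :
  jacobi_eq rc lam x (- w) -> jacobi_eq rc lam (fun y => x (- y)) w.
Proof.
  unfold jacobi_eq. rewrite jacobi_off_reflect, jacobi_diag_even.
  replace (- w - 4) with (- (w + 4)) by ring. rewrite jacobi_off_reflect.
  replace (w + 4 - 4) with w by ring. replace (- (w - 4)) with (- w + 4) by ring.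
  replace (- (w + 4)) with (- w - 4) by ring. lra.
Qed.

Lemma jacobi_eq_forward (rc lam c : R) (x : R -> R) (v : R) :
  jacobi_off rc v <> 0 -> jacobi_eq rc lam x v ->
  x (v + 4) = 2 * c * x v - x (v - 4)
              + ((lam - jacobi_diag rc v) / jacobi_off rc v - 2 * c) * x v
              + (1 - jacobi_off rc (v - 4) / jacobi_off rc v) * x (v - 4).
Proof.
  intros hA h. unfold jacobi_eq in h.
  apply (Rmult_eq_reg_l (jacobi_off rc v)); [|exact hA].
  field_simplify; [|exact hA]. lra.
Qed.

Lemma vpt_succ (eps : R) (m : Z) : vpt eps (m + 1) = vpt eps m + 4.
Proof. unfold vpt. rewrite plus_IZR. ring. Qed.

Lemma vpt_pred (eps : R) (m : Z) : vpt eps (m - 1) = vpt eps m - 4.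
Proof. unfold vpt. rewrite minus_IZR. ring. Qed.

Lemma eigen_eq_modulus_subsolution (rc eps lam : R) (psi : R -> Cx) (m : Z) :
  eigen_eq rc eps lam psi ->
  Rabs (lam - jacobi_diag rc (vpt eps m)) * Cmod (psi (vpt eps m)) <=
  Rabs (jacobi_off rc (vpt eps m)) * Cmod (psi (vpt eps (m + 1)))
  + Rabs (jacobi_off rc (vpt eps m - 4)) * Cmod (psi (vpt eps (m - 1))).
Proof.
  intro heig. rewrite vpt_succ, vpt_pred.
  pose proof (eigen_eq_jacobi_re _ _ _ _ heig m). pose proof (eigen_eq_jacobi_im _ _ _ _ heig m).
  unfold jacobi_eq in *. apply Cmod_lin_comb_le; lra.
Qed.

Lemma eigen_eq_modulus_subsolution_reflected (rc eps lam : R) (psi : R -> Cx) (m : Z) :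
  eigen_eq rc eps lam psi ->
  Rabs (lam - jacobi_diag rc (- vpt eps m)) * Cmod (psi (vpt eps m)) <=
  Rabs (jacobi_off rc (- vpt eps m)) * Cmod (psi (vpt eps (m - 1)))
  + Rabs (jacobi_off rc (- vpt eps m - 4)) * Cmod (psi (vpt eps (m + 1))).
Proof.
  intro heig. pose proof (eigen_eq_modulus_subsolution rc eps lam psi m heig).
  rewrite jacobi_diag_even, jacobi_off_reflect.
  replace (- vpt eps m - 4) with (- (vpt eps m + 4)) by ring.
  rewrite jacobi_off_reflect. replace (vpt eps m + 4 - 4) with (vpt eps m) by ring. lra.
Qed.

(** * A maximum principle for three-term subsolutions *)

Lemma finite_argmax (f : nat -> R) (M : nat) :
  exists k, (k <= M)%nat /\ forall n, (n <= M)%nat -> f n <= f k.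
Proof.
  induction M as [|M [k [hk hmax]]].
  - exists 0%nat. split; [lia|]. intros n hn. replace n with 0%nat by lia. lra.
  - destruct (Rle_lt_dec (f (S M)) (f k)) as [h|h].
    + exists k. split; [lia|]. intros n hn.
      destruct (Nat.eq_dec n (S M)) as [->|]; [lra|apply hmax; lia].
    + exists (S M). split; [lia|]. intros n hn.
      destruct (Nat.eq_dec n (S M)) as [->|]; [lra|]. specialize (hmax n ltac:(lia)). lra.
Qed.

Lemma max_principle (h p p' q : nat -> R) :
  h 0%nat <= 0 ->
  (forall e, 0 < e -> exists N, forall n, (N <= n)%nat -> h n < e) ->
  (forall n, (1 <= n)%nat -> q n * h n <= p n * h (S n) + p' n * h (n - 1)%nat) ->
  (forall n, (1 <= n)%nat -> 0 <= p n /\ 0 <= p' n /\ p n + p' n < q n) ->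
  forall n, h n <= 0.
Proof.
  intros h0 hsmall hsub hcoef n.
  destruct (Rle_lt_dec (h n) 0) as [|hn]; auto. exfalso.
  destruct (hsmall (h n) hn) as [N hN].
  destruct (finite_argmax h (max N n)) as [k [hk hmax]].
  assert (hall : forall m, h m <= h k).
  { intro m. destruct (le_lt_dec m (max N n)); [apply hmax; auto|].
    specialize (hN m ltac:(lia)). specialize (hmax n ltac:(lia)). lra. }
  assert (hkpos : 0 < h k) by (specialize (hall n); lra).
  destruct k as [|k]; [lra|].
  specialize (hsub (S k) ltac:(lia)). destruct (hcoef (S k) ltac:(lia)) as [hp [hp' hlt]].
  pose proof (Rmult_le_compat_l _ _ _ hp (hall (S (S k)))).
  pose proof (Rmult_le_compat_l _ _ _ hp' (hall (S k - 1)%nat)).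
  nra.
Qed.

Lemma subsolution_decay (a p p' q : nat -> R) (kap : R) :
  (forall n, 0 <= a n) -> Un_cv a 0 ->
  (forall n, (1 <= n)%nat -> q n * a n <= p n * a (S n) + p' n * a (n - 1)%nat) ->
  (forall n, (1 <= n)%nat -> 0 <= p n /\ 0 <= p' n /\
      p n * exp (- kap) + p' n * exp kap <= q n /\ p n + p' n < q n) ->
  forall n, a n <= a 0%nat * exp (- kap * INR n).
Proof.
  intros ha hcv hsub hcoef n.
  set (g := fun m => a 0%nat * exp (- kap * INR m)).
  assert (hg : forall m, 0 <= g m)
    by (intro m; apply Rmult_le_pos; [apply ha|apply Rlt_le, exp_pos]).
  enough (a n - g n <= 0) by (unfold g in *; lra).
  apply (max_principle (fun m => a m - g m) p p' q).
  - unfold g. simpl. rewrite Rmult_0_r, exp_0. lra.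
  - intros e he. destruct (hcv e he) as [N hN]. exists N. intros m hm.
    specialize (hN m hm). unfold R_dist in hN. rewrite Rminus_0_r, Rabs_right in hN
      by apply Rle_ge, ha. specialize (hg m). lra.
  - intros m hm. destruct (hcoef m hm) as [hp [hp' [hq _]]]. specialize (hsub m hm).
    assert (eS : g (S m) = g m * exp (- kap))
      by (unfold g; rewrite S_INR;
          replace (- kap * (INR m + 1)) with (- kap * INR m + - kap) by ring;
          rewrite exp_plus; ring).
    assert (eP : g (m - 1)%nat = g m * exp kap)
      by (unfold g; rewrite minus_INR by lia;
          replace (- kap * (INR m - INR 1)) with (- kap * INR m + kap) by (simpl; ring);
          rewrite exp_plus; ring).
    rewrite eS, eP. pose proof (Rmult_le_compat_l _ _ _ (hg m) hq). nra.
  - intros m hm. destruct (hcoef m hm) as [? [? [_ ?]]]. auto.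
Qed.

(** * Recurrences with summable perturbations *)

Definition harmonic_gap (n : nat) : R := 1 / INR (S n) - 1 / INR (S (S n)).

Lemma harmonic_gap_ge0 (n : nat) : 0 <= harmonic_gap n.
Proof.
  unfold harmonic_gap. rewrite !S_INR. pose proof (pos_INR n).
  assert (1 / (INR n + 1 + 1) <= 1 / (INR n + 1))
    by (unfold Rdiv; rewrite !Rmult_1_l; apply Rinv_le_contravar; lra).
  lra.
Qed.

Lemma increments_tail_bound (W : nat -> R) (D : R) :
  (forall n, Rabs (W (S n) - W n) <= D * harmonic_gap n) ->
  forall n d, Rabs (W (n + d)%nat - W n) <= D * (1 / INR (S n) - 1 / INR (S (n + d))).
Proof.
  intros hW n d. induction d as [|d IH].
  - rewrite Nat.add_0_r. unfold Rminus. rewrite Rplus_opp_r, Rabs_R0. lra.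
  - rewrite Nat.add_succ_r.
    pose proof (Rabs_triang (W (S (n + d)) - W (n + d)%nat) (W (n + d)%nat - W n)) as ht.
    replace (W (S (n + d)) - W (n + d)%nat + (W (n + d)%nat - W n))
      with (W (S (n + d)) - W n) in ht by ring.
    specialize (hW (n + d)%nat). unfold harmonic_gap in hW. lra.
Qed.

Section SummableIncrements.
Variables (W : nat -> R) (D : R).
Hypothesis D_ge0 : 0 <= D.
Hypothesis W_incr : forall n, Rabs (W (S n) - W n) <= D * harmonic_gap n.

Lemma increments_dist (n m : nat) : (n <= m)%nat -> Rabs (W m - W n) <= D / INR (S n).
Proof.
  intro h. replace m with (n + (m - n))%nat by lia.
  eapply Rle_trans; [apply increments_tail_bound, W_incr|].
  assert (0 < 1 / INR (S (n + (m - n)))) by (apply Rdiv_lt_0_compat; [lra|apply lt_0_INR; lia]).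
  unfold Rdiv in *. nra.
Qed.

Lemma increments_cauchy : Cauchy_crit W.
Proof.
  intros e he. destruct (nat_above (2 * D / e)) as [N hN].
  exists N. intros n m hn hm. unfold R_dist.
  pose proof (increments_dist N n hn). pose proof (increments_dist N m hm) as hm'.
  rewrite Rabs_minus_sym in hm'.
  pose proof (Rabs_triang (W n - W N) (W N - W m)) as ht.
  replace (W n - W N + (W N - W m)) with (W n - W m) in ht by ring.
  assert (D / INR (S N) < e / 2).
  { rewrite S_INR. pose proof (pos_INR N).
    assert (2 * D < e * INR N) by (apply (Rmult_lt_compat_r e) in hN; auto;
      unfold Rdiv in hN; rewrite Rmult_assoc, Rinv_l in hN by lra; lra).
    apply (Rmult_lt_reg_r (INR N + 1)); [lra|]. unfold Rdiv.
    rewrite Rmult_assoc, Rinv_l by lra. lra. }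
  lra.
Qed.

Lemma increments_limit : exists X, forall n, Rabs (X - W n) <= D / INR (S n).
Proof.
  destruct (R_complete W increments_cauchy) as [X hX].
  exists X. intro n. apply (Un_cv_dist_le W X (W n) _ n hX). apply increments_dist.
Qed.
End SummableIncrements.

Lemma growth_bound (T : nat -> R) (c : R) : 0 <= c -> (forall n, 0 <= T n) ->
  (forall n, T (S n) <= T n * (1 + c * harmonic_gap n)) -> forall n, T n <= T 0%nat * exp c.
Proof.
  intros hc hT hstep.
  assert (hpartial : forall n, T n <= T 0%nat * exp (c * (1 - 1 / INR (S n)))).
  { induction n as [|n IH].
    - simpl. replace (c * (1 - 1 / 1)) with 0 by field. rewrite exp_0. lra.
    - eapply Rle_trans; [apply hstep|].
      pose proof (harmonic_gap_ge0 n).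
      pose proof (exp_ineq1_le (c * harmonic_gap n)).
      eapply Rle_trans.
      { apply Rmult_le_compat; [apply hT|nra|apply IH|eassumption]. }
      rewrite Rmult_assoc, <- exp_plus. right. f_equal. f_equal. unfold harmonic_gap. ring. }
  intro n. eapply Rle_trans; [apply hpartial|]. apply Rmult_le_compat_l; [apply hT|].
  assert (0 < 1 / INR (S n)) by (apply Rdiv_lt_0_compat; [lra|apply lt_0_INR; lia]).
  apply exp_le_mono. nra.
Qed.

Section PerturbedChebyshev.
Variables (u a b : nat -> R) (th K : R).
Hypothesis th_range : 0 < th < PI.
Hypothesis K_ge0 : 0 <= K.
Hypothesis u_rec : forall n, (1 <= n)%nat ->
  u (S n) = 2 * cos th * u n - u (n - 1)%nat + a n * u n + b n * u (n - 1)%nat.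
Hypothesis ab_small : forall n, Rabs (a (S n)) + Rabs (b (S n)) <= K * harmonic_gap n.

Let sth : R := sin th.
Let phase (n : nat) : R := INR n * th.
Let forcing (n : nat) : R := a (S n) * u (S n) + b (S n) * u n.

(* Variation of constants: the coordinates of (u n, u (n+1)) in the basis of the two
   solutions cos (n th), sin (n th) of the unperturbed recurrence. *)
Definition amp_cos (n : nat) : R := (u n * sin (phase (S n)) - u (S n) * sin (phase n)) / sth.
Definition amp_sin (n : nat) : R := (u (S n) * cos (phase n) - u n * cos (phase (S n))) / sth.
Definition amp_size (n : nat) : R := Rabs (amp_cos n) + Rabs (amp_sin n).

Lemma sth_pos : 0 < sth.
Proof. apply sin_gt_0; lra. Qed.

Lemma phase_succ (n : nat) : phase (S n) = phase n + th.
Proof. unfold phase. rewrite S_INR. ring. Qed.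

Lemma phase_wronskian (n : nat) :
  sin (phase n + th) * cos (phase n) - cos (phase n + th) * sin (phase n) = sth.
Proof. unfold sth. rewrite <- sin_minus. f_equal. ring. Qed.

Lemma u_amp (n : nat) : u n = amp_cos n * cos (phase n) + amp_sin n * sin (phase n).
Proof.
  pose proof sth_pos. unfold amp_cos, amp_sin. rewrite phase_succ.
  transitivity
    (u n * (sin (phase n + th) * cos (phase n) - cos (phase n + th) * sin (phase n)) / sth).
  - rewrite phase_wronskian. field. lra.
  - field. lra.
Qed.

Lemma u_amp_succ (n : nat) :
  u (S n) = amp_cos n * cos (phase (S n)) + amp_sin n * sin (phase (S n)).
Proof.
  pose proof sth_pos. unfold amp_cos, amp_sin. rewrite phase_succ.
  transitivity
    (u (S n) * (sin (phase n + th) * cos (phase n) - cos (phase n + th) * sin (phase n)) / sth).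
  - rewrite phase_wronskian. field. lra.
  - field. lra.
Qed.

Lemma amp_cos_succ (n : nat) : amp_cos (S n) = amp_cos n - forcing n * sin (phase (S n)) / sth.
Proof.
  pose proof sth_pos. unfold amp_cos, forcing. rewrite (u_rec (S n)) by lia.
  replace (S n - 1)%nat with n by lia. rewrite (phase_succ (S n)), (phase_succ n).
  replace (sin (phase n + th + th)) with (2 * sin (phase n + th) * cos th - sin (phase n))
    by (pose proof (sin_sum_diff (phase n + th) th) as e;
        replace (phase n + th - th) with (phase n) in e by ring; lra).
  field. lra.
Qed.

Lemma amp_sin_succ (n : nat) : amp_sin (S n) = amp_sin n + forcing n * cos (phase (S n)) / sth.
Proof.
  pose proof sth_pos. unfold amp_sin, forcing. rewrite (u_rec (S n)) by lia.
  replace (S n - 1)%nat with n by lia. rewrite (phase_succ (S n)), (phase_succ n).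
  replace (cos (phase n + th + th)) with (2 * cos (phase n + th) * cos th - cos (phase n))
    by (pose proof (cos_sum_diff (phase n + th) th) as e;
        replace (phase n + th - th) with (phase n) in e by ring; lra).
  field. lra.
Qed.

Lemma u_le_amp_size (n : nat) : Rabs (u n) <= amp_size n /\ Rabs (u (S n)) <= amp_size n.
Proof.
  split; [rewrite u_amp|rewrite u_amp_succ];
    apply trig_comb_bound; auto using Rabs_cos_le1, Rabs_sin_le1.
Qed.

Lemma forcing_bound (n : nat) : Rabs (forcing n) <= K * harmonic_gap n * amp_size n.
Proof.
  destruct (u_le_amp_size n) as [h0 h1]. pose proof (ab_small n).
  unfold forcing. eapply Rle_trans; [apply Rabs_triang|]. rewrite !Rabs_mult.
  pose proof (Rabs_pos (a (S n))). pose proof (Rabs_pos (b (S n))). pose proof (Rabs_pos (u n)).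
  assert ((Rabs (a (S n)) + Rabs (b (S n))) * amp_size n <= K * harmonic_gap n * amp_size n)
    by (apply Rmult_le_compat_r; lra).
  nra.
Qed.

Lemma amp_incr_bound (n : nat) :
  Rabs (amp_cos (S n) - amp_cos n) <= Rabs (forcing n) / sth /\
  Rabs (amp_sin (S n) - amp_sin n) <= Rabs (forcing n) / sth.
Proof.
  pose proof sth_pos. rewrite amp_cos_succ, amp_sin_succ.
  replace (amp_cos n - forcing n * sin (phase (S n)) / sth - amp_cos n)
    with (- (forcing n * sin (phase (S n)) / sth)) by ring.
  replace (amp_sin n + forcing n * cos (phase (S n)) / sth - amp_sin n)
    with (forcing n * cos (phase (S n)) / sth) by ring.
  rewrite Rabs_Ropp. unfold Rdiv. rewrite !Rabs_mult, Rabs_inv, (Rabs_right sth) by lra.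
  pose proof (Rabs_sin_le1 (phase (S n))). pose proof (Rabs_cos_le1 (phase (S n))).
  pose proof (Rabs_pos (forcing n)). assert (0 < / sth) by (apply Rinv_0_lt_compat; lra).
  split; (apply Rmult_le_compat_r; [lra|]);
    rewrite <- (Rmult_1_r (Rabs (forcing n))) at 2; apply Rmult_le_compat_l; lra.
Qed.

Lemma amp_size_succ (n : nat) : amp_size (S n) <= amp_size n * (1 + 2 * K / sth * harmonic_gap n).
Proof.
  pose proof sth_pos. destruct (amp_incr_bound n) as [hc hs]. pose proof (forcing_bound n).
  assert (Rabs (forcing n) / sth <= K * harmonic_gap n * amp_size n / sth)
    by (unfold Rdiv; apply Rmult_le_compat_r; [apply Rlt_le, Rinv_0_lt_compat|]; lra).
  pose proof (Rabs_triang (amp_cos (S n) - amp_cos n) (amp_cos n)).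
  pose proof (Rabs_triang (amp_sin (S n) - amp_sin n) (amp_sin n)).
  replace (amp_cos (S n) - amp_cos n + amp_cos n) with (amp_cos (S n)) in * by ring.
  replace (amp_sin (S n) - amp_sin n + amp_sin n) with (amp_sin (S n)) in * by ring.
  replace (amp_size n * (1 + 2 * K / sth * harmonic_gap n))
    with (amp_size n + 2 * (K * harmonic_gap n * amp_size n / sth)) by (field; lra).
  unfold amp_size in *. lra.
Qed.

Lemma amp_size_ge0 (n : nat) : 0 <= amp_size n.
Proof.
  unfold amp_size. pose proof (Rabs_pos (amp_cos n)). pose proof (Rabs_pos (amp_sin n)). lra.
Qed.

Lemma amp_increments_summable : exists D, 0 <= D /\ forall n,
  Rabs (amp_cos (S n) - amp_cos n) <= D * harmonic_gap n /\
  Rabs (amp_sin (S n) - amp_sin n) <= D * harmonic_gap n.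
Proof.
  pose proof sth_pos.
  assert (hc : 0 <= 2 * K / sth) by (apply Rmult_le_pos; [lra|apply Rlt_le, Rinv_0_lt_compat; lra]).
  set (Mb := amp_size 0%nat * exp (2 * K / sth)).
  assert (hsize : forall n, amp_size n <= Mb)
    by (apply growth_bound; auto using amp_size_succ, amp_size_ge0).
  exists (K * Mb / sth). split.
  - pose proof (hsize 0%nat). pose proof (amp_size_ge0 0).
    apply Rmult_le_pos; [apply Rmult_le_pos|apply Rlt_le, Rinv_0_lt_compat]; lra.
  - intro n. pose proof (forcing_bound n). pose proof (hsize n). pose proof (harmonic_gap_ge0 n).
    assert (Rabs (forcing n) / sth <= K * Mb / sth * harmonic_gap n).
    { replace (K * Mb / sth * harmonic_gap n) with (K * harmonic_gap n * Mb / sth) by (field; lra).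
      unfold Rdiv. apply Rmult_le_compat_r; [apply Rlt_le, Rinv_0_lt_compat; lra|].
      eapply Rle_trans; [eassumption|]. apply Rmult_le_compat_l; [apply Rmult_le_pos|]; lra. }
    destruct (amp_incr_bound n). split; lra.
Qed.

Lemma perturbed_chebyshev_asymptotics : exists X Y C, 0 <= C /\ forall n,
  Rabs (u n - (X * cos (INR n * th) + Y * sin (INR n * th))) <= C / INR (S n).
Proof.
  destruct amp_increments_summable as [D [hD hincr]].
  destruct (increments_limit amp_cos D hD) as [X hX]; [apply hincr|].
  destruct (increments_limit amp_sin D hD) as [Y hY]; [apply hincr|].
  exists X, Y, (2 * D). split; [lra|]. intro n.
  rewrite u_amp. fold (phase n).
  replace (amp_cos n * cos (phase n) + amp_sin n * sin (phase n)
           - (X * cos (phase n) + Y * sin (phase n)))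
    with ((X - amp_cos n) * (- cos (phase n)) + (Y - amp_sin n) * (- sin (phase n))) by ring.
  eapply Rle_trans;
    [apply trig_comb_bound; rewrite Rabs_Ropp; auto using Rabs_cos_le1, Rabs_sin_le1|].
  specialize (hX n). specialize (hY n). unfold Rdiv in *. lra.
Qed.
End PerturbedChebyshev.

(** * Oscillation below the critical density *)

Lemma jacobi_oscillation (rc lam w0 : R) (x : R -> R) :
  0 < rc -> 0 < lam < rc -> 16 <= w0 ->
  (forall n : nat, jacobi_eq rc lam x (w0 + 4 * INR n)) ->
  exists X Y C, 0 <= C /\ forall n : nat,
    Rabs (x (w0 + 4 * INR n) - (X * cos (INR n * acos (1 - 2 * lam / rc))
                                + Y * sin (INR n * acos (1 - 2 * lam / rc)))) <= C / INR (S n).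
Proof.
  intros hrc hlam hw hrec.
  pose proof (ratio_in_unit lam rc hlam) as hl.
  set (th := acos (1 - 2 * lam / rc)).
  assert (hth : 0 < th < PI) by (apply acos_bound_lt; unfold Rdiv in *; lra).
  assert (hcos : cos th = 1 - 2 * lam / rc) by (apply cos_acos; unfold Rdiv in *; lra).
  clearbody th.
  set (w := fun n : nat => w0 + 4 * INR n).
  assert (hwS : forall n, w (S n) = w n + 4) by (intro n; unfold w; rewrite S_INR; ring).
  set (a := fun n => (lam - jacobi_diag rc (w n)) / jacobi_off rc (w n) - 2 * cos th).
  set (b := fun n => 1 - jacobi_off rc (w n - 4) / jacobi_off rc (w n)).
  apply (perturbed_chebyshev_asymptotics (fun n => x (w n)) a b th 7); auto; [lra| |].
  - intros n hn. replace (w (n - 1)%nat) with (w n - 4)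
      by (unfold w; rewrite minus_INR by lia; simpl; ring).
    rewrite hwS. apply jacobi_eq_forward; [|apply hrec].
    apply jacobi_off_neq0; [assumption|]. unfold w. pose proof (pos_INR n). lra.
  - intro n. unfold a, b. rewrite hcos.
    assert (hv : 16 <= w (S n)) by (unfold w; pose proof (pos_INR (S n)); lra).
    pose proof (diag_ratio_near rc lam (w (S n)) hrc hlam hv).
    pose proof (off_ratio_near rc (w (S n)) hrc hv).
    assert (hgap : 112 / (w (S n) - 4)^2 <= 7 * harmonic_gap n).
    { unfold harmonic_gap. rewrite !S_INR. pose proof (pos_INR n).
      replace (w (S n) - 4) with (4 * (w0 / 4 + INR n)) by (unfold w; rewrite S_INR; field).
      replace (7 * (1 / (INR n + 1) - 1 / (INR n + 1 + 1))) with (7 / ((INR n + 1) * (INR n + 2)))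
        by (field; lra).
      replace (112 / (4 * (w0 / 4 + INR n))^2) with (7 / (w0 / 4 + INR n)^2)
        by (field; lra).
      unfold Rdiv. apply Rmult_le_compat_l; [lra|]. apply Rinv_le_contravar; nra. }
    lra.
Qed.

Definition osc_freq (rc lam : R) : R := acos (1 - 2 * lam / rc) / 4.

Lemma eigenfunction_oscillation_ray (rc lam w0 : R) (phi : R -> Cx) :
  0 < rc -> 0 < lam < rc -> 16 <= w0 ->
  (forall n : nat, jacobi_eq rc lam (fun w => fst (phi w)) (w0 + 4 * INR n)) ->
  (forall n : nat, jacobi_eq rc lam (fun w => snd (phi w)) (w0 + 4 * INR n)) ->
  exists (al al' : Cx) (C : R), 0 <= C /\ forall n : nat,
    Cmod (Csub (phi (w0 + 4 * INR n))
               (Cadd (Cmul al (Cexpi (osc_freq rc lam * (w0 + 4 * INR n))))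
                     (Cmul al' (Cexpi (- osc_freq rc lam * (w0 + 4 * INR n))))))
    <= C / (w0 + 4 * INR n).
Proof.
  intros hrc hlam hw hre him.
  destruct (jacobi_oscillation rc lam w0 _ hrc hlam hw hre) as [X1 [Y1 [C1 [hC1 h1]]]].
  destruct (jacobi_oscillation rc lam w0 _ hrc hlam hw him) as [X2 [Y2 [C2 [hC2 h2]]]].
  set (k := osc_freq rc lam). set (p0 := k * w0).
  exists (amp_plus (X1 * cos p0 - Y1 * sin p0) (X1 * sin p0 + Y1 * cos p0)
                   (X2 * cos p0 - Y2 * sin p0) (X2 * sin p0 + Y2 * cos p0)),
         (amp_minus (X1 * cos p0 - Y1 * sin p0) (X1 * sin p0 + Y1 * cos p0)
                    (X2 * cos p0 - Y2 * sin p0) (X2 * sin p0 + Y2 * cos p0)),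
         (w0 * (C1 + C2)).
  split; [nra|]. intro n. specialize (h1 n). specialize (h2 n).
  assert (eth : INR n * acos (1 - 2 * lam / rc) = k * (w0 + 4 * INR n) - p0)
    by (unfold p0, k, osc_freq; field).
  rewrite eth, cos_sin_shift in h1, h2.
  replace (- k * (w0 + 4 * INR n)) with (- (k * (w0 + 4 * INR n))) by ring.
  eapply Rle_trans; [apply Cmod_sub_cexpi_pair; eassumption|].
  pose proof (pos_INR n). rewrite S_INR in *.
  assert (hfrac : / (INR n + 1) <= w0 * / (w0 + 4 * INR n)).
  { replace (/ (INR n + 1)) with (w0 * / (w0 * (INR n + 1))) by (field; lra).
    apply Rmult_le_compat_l; [lra|]. apply Rinv_le_contravar; nra. }
  unfold Rdiv. nra.
Qed.

Lemma vpt_right_ray (eps : R) (j : nat) : vpt eps (Z.of_nat (4 + j)) = (eps + 16) + 4 * INR j.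
Proof. unfold vpt. rewrite <- INR_IZR_INZ, plus_INR. simpl. ring. Qed.

Lemma vpt_left_ray (eps : R) (j : nat) : vpt eps (- Z.of_nat (5 + j)) = - ((20 - eps) + 4 * INR j).
Proof. unfold vpt. rewrite opp_IZR, <- INR_IZR_INZ, plus_INR. simpl. ring. Qed.

Lemma vpt_far_right (eps : R) (m : Z) : 0 < eps < 4 -> 20 < vpt eps m ->
  exists j : nat, m = Z.of_nat (4 + j).
Proof.
  unfold vpt. intros heps hv. assert (hm : (4 < m)%Z) by (apply lt_IZR; lra).
  exists (Z.to_nat (m - 4)). lia.
Qed.

Lemma vpt_far_left (eps : R) (m : Z) : 0 < eps < 4 -> vpt eps m < - 20 ->
  exists j : nat, m = (- Z.of_nat (5 + j))%Z.
Proof.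
  unfold vpt. intros heps hv. assert (hm : (m < - 5)%Z) by (apply lt_IZR; lra).
  exists (Z.to_nat (- m - 5)). lia.
Qed.

Lemma eigenfunction_oscillation (rc eps lam : R) (psi : R -> Cx) :
  0 < rc -> 0 < eps < 4 -> 0 < lam < rc -> eigen_eq rc eps lam psi ->
  exists (ap ap' am am' : Cx) (C V0 : R), 0 < C /\
    forall n : Z,
      (V0 < vpt eps n ->
         Cmod (Csub (psi (vpt eps n))
                (Cadd (Cmul ap (Cexpi (osc_freq rc lam * vpt eps n)))
                      (Cmul ap' (Cexpi (- osc_freq rc lam * vpt eps n)))))
         <= C / Rabs (vpt eps n)) /\
      (vpt eps n < - V0 ->
         Cmod (Csub (psi (vpt eps n))
                (Cadd (Cmul am (Cexpi (osc_freq rc lam * vpt eps n)))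
                      (Cmul am' (Cexpi (- osc_freq rc lam * vpt eps n)))))
         <= C / Rabs (vpt eps n)).
Proof.
  intros hrc heps hlam heig.
  pose proof (eigen_eq_jacobi_re _ _ _ _ heig) as hre.
  pose proof (eigen_eq_jacobi_im _ _ _ _ heig) as him.
  destruct (eigenfunction_oscillation_ray rc lam (eps + 16) psi hrc hlam ltac:(lra))
    as [ap [ap' [Cr [hCr hr]]]];
    try (intro j; rewrite <- vpt_right_ray; auto).
  destruct (eigenfunction_oscillation_ray rc lam (20 - eps) (fun w => psi (- w))
              hrc hlam ltac:(lra))
    as [bm [bm' [Cl [hCl hl]]]];
    try (intro j; apply (jacobi_eq_reflect _ _ (fun w => _ (psi w)));
         rewrite <- vpt_left_ray; auto).
  exists ap, ap', bm', bm, (Cr + Cl + 1), 20. split; [lra|]. intro m. split.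
  - intro hv. destruct (vpt_far_right eps m heps hv) as [j ->].
    rewrite vpt_right_ray in *. rewrite Rabs_right by (pose proof (pos_INR j); lra).
    eapply Rle_trans; [apply hr|]. pose proof (pos_INR j).
    unfold Rdiv. apply Rmult_le_compat_r; [apply Rlt_le, Rinv_0_lt_compat|]; lra.
  - intro hv. destruct (vpt_far_left eps m heps hv) as [j ->].
    rewrite vpt_left_ray in *. rewrite Rabs_Ropp, Rabs_right by (pose proof (pos_INR j); lra).
    specialize (hl j). cbv beta in hl.
    replace (osc_freq rc lam * - ((20 - eps) + 4 * INR j))
      with (- osc_freq rc lam * ((20 - eps) + 4 * INR j)) by ring.
    replace (- osc_freq rc lam * - ((20 - eps) + 4 * INR j))
      with (osc_freq rc lam * ((20 - eps) + 4 * INR j)) by ring.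
    rewrite Cadd_comm. eapply Rle_trans; [apply hl|]. pose proof (pos_INR j).
    unfold Rdiv. apply Rmult_le_compat_r; [apply Rlt_le, Rinv_0_lt_compat|]; lra.
Qed.

(** * Exponential decay above the critical density *)

Section SquareSummable.
Variables (eps : R) (psi : R -> Cx).

Let sq (m : Z) : R := Cmod (psi (vpt eps m)) ^ 2.

Definition l2_partial_sum (N : nat) : R :=
  sum_f_R0 (fun j => Cmod (psi (vpt eps (Z.of_nat j - Z.of_nat N)%Z)) ^ 2) (2 * N).

Lemma l2_partial_sum_succ (N : nat) :
  l2_partial_sum (S N) = l2_partial_sum N + sq (Z.of_nat (S N)) + sq (- Z.of_nat (S N))%Z.
Proof.
  unfold l2_partial_sum. replace (2 * S N)%nat with (S (S (2 * N))) by lia.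
  change (sum_f_R0 ?f (S ?n)) with (sum_f_R0 f n + f (S n)).
  rewrite decomp_sum by lia. simpl Init.Nat.pred.
  rewrite (sum_eq (fun i => Cmod (psi (vpt eps (Z.of_nat (S i) - Z.of_nat (S N))%Z)) ^ 2)
    (fun j => Cmod (psi (vpt eps (Z.of_nat j - Z.of_nat N)%Z)) ^ 2)).
  2: { intros i _. do 4 f_equal. lia. }
  unfold sq. replace (Z.of_nat 0 - Z.of_nat (S N))%Z with (- Z.of_nat (S N))%Z by lia.
  replace (Z.of_nat (S (S (2 * N))) - Z.of_nat (S N))%Z with (Z.of_nat (S N)) by lia.
  replace (N + (N + 0))%nat with (2 * N)%nat by lia. ring.
Qed.

Lemma in_l2_tails_vanish : in_l2 eps psi -> forall e, 0 < e -> exists N : nat,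
  forall k : nat, (N <= k)%nat ->
    Cmod (psi (vpt eps (Z.of_nat k))) < e /\ Cmod (psi (vpt eps (- Z.of_nat k)%Z)) < e.
Proof.
  intros [Mb hMb] e he.
  assert (hsq : forall m, 0 <= sq m) by (intro; apply pow2_ge_0).
  assert (hgrow : Un_growing l2_partial_sum).
  { intro n. rewrite l2_partial_sum_succ. pose proof (hsq (Z.of_nat (S n))).
    pose proof (hsq (- Z.of_nat (S n))%Z). lra. }
  destruct (growing_cv l2_partial_sum hgrow) as [l hl].
  { exists Mb. intros x [i ->]. apply hMb. }
  destruct (hl (e^2 / 2)) as [N hN]; [nra|].
  exists (S N). intros k hk. destruct k as [|k]; [lia|].
  pose proof (hN k ltac:(lia)) as h0. pose proof (hN (S k) ltac:(lia)) as h1.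
  unfold R_dist in *. apply Rabs_def2 in h0. apply Rabs_def2 in h1.
  rewrite l2_partial_sum_succ in h1.
  pose proof (hsq (Z.of_nat (S k))). pose proof (hsq (- Z.of_nat (S k))%Z).
  assert (sq (Z.of_nat (S k)) < e^2) by lra. assert (sq (- Z.of_nat (S k))%Z < e^2) by lra.
  unfold sq in *. pose proof (Cmod_ge0 (psi (vpt eps (Z.of_nat (S k))))).
  pose proof (Cmod_ge0 (psi (vpt eps (- Z.of_nat (S k))))). split; nra.
Qed.
End SquareSummable.

(* Beyond this radius the coefficient errors are at most the relative margin
   (x - 1) / (x + 1)^2, x = lam / rc, by which the limiting recurrence dominates. *)
Definition decay_radius (rc lam : R) : R := 12 + 12 * (lam / rc + 1)^2 / (lam / rc - 1).

Lemma jacobi_coeffs_within (rc v d : R) : 0 <= rc -> 12 <= v -> 12 / (v - 4)^2 <= d ->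
  Rabs (jacobi_off rc v) <= rc/4 * (1 + d) /\
  Rabs (jacobi_off rc (v - 4)) <= rc/4 * (1 + d) /\
  jacobi_diag rc v <= rc/2 * (1 + d).
Proof.
  intros hrc hv hd.
  pose proof (inv_sqr_le (v - 4) v ltac:(lra)) as hinv.
  assert (12 / v^2 <= d) by (unfold Rdiv in *; lra).
  pose proof (jacobi_off_near rc v hrc ltac:(lra)) as hA.
  pose proof (jacobi_off_near rc (v - 4) hrc ltac:(lra)) as hAm.
  pose proof (jacobi_diag_near rc v hrc ltac:(lra)) as hG.
  replace (3 * rc / v^2) with (rc/4 * (12 / v^2)) in hA by (field; nra).
  replace (3 * rc / (v - 4)^2) with (rc/4 * (12 / (v - 4)^2)) in hAm by (field; nra).
  replace (2 * rc / v^2) with (rc/6 * (12 / v^2)) in hG by (field; nra).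
  apply Rabs_le_bounds in hA. apply Rabs_le_bounds in hAm. apply Rabs_le_bounds in hG.
  repeat split; try apply Rabs_le; nra.
Qed.

Lemma decay_margin (x : R) : 1 < x ->
  (1 + (x - 1) / (x + 1)^2) * (x + 1)^2 <= 4 * x^2 /\ (x - 1) / (x + 1)^2 < x - 1.
Proof.
  intro hx. split.
  - replace ((1 + (x - 1) / (x + 1)^2) * (x + 1)^2) with ((x + 1)^2 + x - 1) by (field; nra). nra.
  - apply (Rmult_lt_reg_r ((x + 1)^2)); [nra|].
    unfold Rdiv. rewrite Rmult_assoc, Rinv_l by nra. nra.
Qed.

Lemma jacobi_decay_coeffs (rc lam v : R) : 0 < rc < lam -> decay_radius rc lam <= v ->
  Rabs (jacobi_off rc v) * / (lam / rc) + Rabs (jacobi_off rc (v - 4)) * (lam / rc)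
    <= lam - jacobi_diag rc v /\
  Rabs (jacobi_off rc v) + Rabs (jacobi_off rc (v - 4)) < lam - jacobi_diag rc v.
Proof.
  intros hrl hv. unfold decay_radius in hv.
  set (x := lam / rc) in *.
  assert (hx : 1 < x) by (apply ratio_gt1; lra).
  assert (hlx : lam = rc * x) by (unfold x; field; lra).
  set (d := (x - 1) / (x + 1)^2).
  assert (hd : 0 < d) by (apply Rdiv_lt_0_compat; nra).
  assert (hinv : 12 * (x + 1)^2 / (x - 1) = 12 / d) by (unfold d; field; split; nra).
  rewrite hinv in hv. assert (0 < 12 / d) by (apply Rdiv_lt_0_compat; lra).
  assert (h12 : 12 / (v - 4)^2 <= d).
  { apply Rle_trans with (12 / (12 / d)); [|right; field; lra].
    unfold Rdiv. apply Rmult_le_compat_l; [lra|]. apply Rinv_le_contravar; [lra|]. nra. }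
  destruct (jacobi_coeffs_within rc v d ltac:(lra) ltac:(lra) h12) as [hA [hAm hG]].
  destruct (decay_margin x hx) as [hm1 hm2]. fold d in hm1, hm2.
  assert (0 < / x) by (apply Rinv_0_lt_compat; lra).
  pose proof (Rmult_le_compat_r (/ x) _ _ ltac:(lra) hA).
  pose proof (Rmult_le_compat_r x _ _ ltac:(lra) hAm).
  assert (hsum : rc/4 * (1 + d) * / x + rc/4 * (1 + d) * x + rc/2 * (1 + d) <= lam).
  { replace (rc/4 * (1 + d) * / x + rc/4 * (1 + d) * x + rc/2 * (1 + d))
      with (rc/4 * ((1 + d) * (x + 1)^2) / x) by (field; lra).
    rewrite hlx. apply (Rmult_le_reg_r x); [lra|].
    unfold Rdiv. rewrite Rmult_assoc, Rinv_l by lra. nra. }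
  split; [lra|]. rewrite hlx. nra.
Qed.

Lemma jacobi_decay_ray (rc lam w0 : R) (a : nat -> R) :
  0 < rc < lam -> decay_radius rc lam <= w0 -> (forall n, 0 <= a n) -> Un_cv a 0 ->
  (forall n, (1 <= n)%nat ->
     Rabs (lam - jacobi_diag rc (w0 + 4 * INR n)) * a n <=
     Rabs (jacobi_off rc (w0 + 4 * INR n)) * a (S n)
     + Rabs (jacobi_off rc (w0 + 4 * INR n - 4)) * a (n - 1)%nat) ->
  forall n, a n <= a 0%nat * exp (- ln (lam / rc) * INR n).
Proof.
  intros hrl hw ha hcv hsub.
  assert (hx : 0 < lam / rc) by (apply Rdiv_lt_0_compat; lra).
  apply (subsolution_decay a (fun n => Rabs (jacobi_off rc (w0 + 4 * INR n)))
           (fun n => Rabs (jacobi_off rc (w0 + 4 * INR n - 4)))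
           (fun n => lam - jacobi_diag rc (w0 + 4 * INR n))); auto.
  - intros n hn. eapply Rle_trans; [|apply hsub; auto].
    apply Rmult_le_compat_r; [apply ha|apply Rle_abs].
  - intros n hn. rewrite exp_Ropp, exp_ln by assumption.
    destruct (jacobi_decay_coeffs rc lam (w0 + 4 * INR n) hrl ltac:(pose proof (pos_INR n); lra)).
    repeat split; auto using Rabs_pos.
Qed.

Lemma finite_bound (f : Z -> R) (M : nat) :
  exists B, 0 <= B /\ forall m, (Z.abs m <= Z.of_nat M)%Z -> f m <= B.
Proof.
  induction M as [|M [B [hB hf]]].
  - exists (Rmax 0 (f 0%Z)). split; [apply Rmax_l|]. intros m hm.
    replace m with 0%Z by lia. apply Rmax_r.
  - exists (Rmax B (Rmax (f (Z.of_nat (S M))) (f (- Z.of_nat (S M))%Z))).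
    split; [eapply Rle_trans; [apply hB|apply Rmax_l]|].
    intros m hm. destruct (Z_le_gt_dec (Z.abs m) (Z.of_nat M)).
    + eapply Rle_trans; [apply hf; auto|apply Rmax_l].
    + eapply Rle_trans; [|apply Rmax_r].
      destruct (Z_le_gt_dec 0 m).
      * replace m with (Z.of_nat (S M)) by lia. apply Rmax_l.
      * replace m with (- Z.of_nat (S M))%Z by lia. apply Rmax_r.
Qed.

Lemma two_sided_decay (t : Z -> R) (k : R) (M : nat) : 0 <= k ->
  (forall n : nat, t (Z.of_nat (M + n)) <= t (Z.of_nat M) * exp (- k * INR n)) ->
  (forall n : nat, t (- Z.of_nat (M + n))%Z <= t (- Z.of_nat M)%Z * exp (- k * INR n)) ->
  exists B, 0 <= B /\ forall m, t m <= B * exp (- k * (Rabs (IZR m) - INR M)).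
Proof.
  intros hk hpos hneg. destruct (finite_bound t M) as [B [hB hBf]].
  exists B. split; [exact hB|]. intro m.
  destruct (Z_le_gt_dec (Z.abs m) (Z.of_nat M)) as [h|h].
  - assert (1 <= exp (- k * (Rabs (IZR m) - INR M))).
    { rewrite <- exp_0. apply exp_le_mono. rewrite Rabs_Zabs.
      apply IZR_le in h. rewrite <- INR_IZR_INZ in h. nra. }
    pose proof (hBf m h). nra.
  - destruct (Z_le_gt_dec 0 m).
    + set (n := Z.to_nat (m - Z.of_nat M)).
      assert (em : m = Z.of_nat (M + n)) by (unfold n; lia).
      assert (er : Rabs (IZR m) - INR M = INR n).
      { rewrite em, <- INR_IZR_INZ, Rabs_right, plus_INR by (apply Rle_ge, pos_INR). ring. }
      rewrite er, em. eapply Rle_trans; [apply hpos|].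
      apply Rmult_le_compat_r; [apply Rlt_le, exp_pos|]. apply hBf. lia.
    + set (n := Z.to_nat (- m - Z.of_nat M)).
      assert (em : m = (- Z.of_nat (M + n))%Z) by (unfold n; lia).
      assert (er : Rabs (IZR m) - INR M = INR n).
      { rewrite em, opp_IZR, Rabs_Ropp, <- INR_IZR_INZ, Rabs_right, plus_INR
          by (apply Rle_ge, pos_INR). ring. }
      rewrite er, em. eapply Rle_trans; [apply hneg|].
      apply Rmult_le_compat_r; [apply Rlt_le, exp_pos|]. apply hBf. lia.
Qed.

Section DecayRays.
Variables (rc eps lam : R) (psi : R -> Cx).
Hypothesis rc_lam : 0 < rc < lam.
Hypothesis psi_l2 : in_l2 eps psi.
Hypothesis psi_eigen : eigen_eq rc eps lam psi.

Let t (m : Z) : R := Cmod (psi (vpt eps m)).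

Lemma decay_right (M : nat) : decay_radius rc lam <= vpt eps (Z.of_nat M) ->
  forall n : nat, t (Z.of_nat (M + n)) <= t (Z.of_nat M) * exp (- ln (lam / rc) * INR n).
Proof.
  intros hM n.
  pose proof (jacobi_decay_ray rc lam (vpt eps (Z.of_nat M)) (fun j => t (Z.of_nat (M + j)))
                rc_lam hM) as h.
  cbv beta in h. rewrite Nat.add_0_r in h. apply h; clear h.
  - intro; apply Cmod_ge0.
  - intros e he. destruct (in_l2_tails_vanish eps psi psi_l2 e he) as [N hN]. exists N.
    intros j hj. unfold R_dist. rewrite Rminus_0_r, Rabs_right by apply Rle_ge, Cmod_ge0.
    apply (hN (M + j)%nat). lia.
  - intros j hj.
    pose proof (eigen_eq_modulus_subsolution rc eps lam psi (Z.of_nat (M + j)) psi_eigen) as h.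
    change (Cmod (psi (vpt eps ?m))) with (t m) in h.
    replace (vpt eps (Z.of_nat (M + j))) with (vpt eps (Z.of_nat M) + 4 * INR j) in h
      by (unfold vpt; rewrite <- !INR_IZR_INZ, plus_INR; ring).
    replace (Z.of_nat (M + j) + 1)%Z with (Z.of_nat (M + S j)) in h by lia.
    replace (Z.of_nat (M + j) - 1)%Z with (Z.of_nat (M + (j - 1))) in h by lia.
    exact h.
Qed.

Lemma decay_left (M : nat) : decay_radius rc lam <= - vpt eps (- Z.of_nat M) ->
  forall n : nat, t (- Z.of_nat (M + n))%Z <= t (- Z.of_nat M)%Z * exp (- ln (lam / rc) * INR n).
Proof.
  intros hM n.
  pose proof (jacobi_decay_ray rc lam (- vpt eps (- Z.of_nat M)) (fun j => t (- Z.of_nat (M + j))%Z)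
                rc_lam hM) as h.
  cbv beta in h. rewrite Nat.add_0_r in h. apply h; clear h.
  - intro; apply Cmod_ge0.
  - intros e he. destruct (in_l2_tails_vanish eps psi psi_l2 e he) as [N hN]. exists N.
    intros j hj. unfold R_dist. rewrite Rminus_0_r, Rabs_right by apply Rle_ge, Cmod_ge0.
    apply (hN (M + j)%nat). lia.
  - intros j hj.
    pose proof (eigen_eq_modulus_subsolution_reflected rc eps lam psi (- Z.of_nat (M + j))
                  psi_eigen) as h.
    change (Cmod (psi (vpt eps ?m))) with (t m) in h.
    replace (- vpt eps (- Z.of_nat (M + j))) with (- vpt eps (- Z.of_nat M) + 4 * INR j) in h
      by (unfold vpt; rewrite !opp_IZR, <- !INR_IZR_INZ, plus_INR; ring).
    replace (- Z.of_nat (M + j) - 1)%Z with (- Z.of_nat (M + S j))%Z in h by lia.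
    replace (- Z.of_nat (M + j) + 1)%Z with (- Z.of_nat (M + (j - 1)))%Z in h by lia.
    exact h.
Qed.
End DecayRays.

Definition decay_rate (rc lam : R) : R := ln (lam / rc) / 4.

Lemma decay_rate_pos (rc lam : R) : 0 < rc < lam -> 0 < decay_rate rc lam.
Proof.
  intro h. unfold decay_rate.
  assert (ln 1 < ln (lam / rc)); [|rewrite ln_1 in *; lra].
  apply ln_increasing; [lra|]. apply ratio_gt1; lra.
Qed.

Lemma decay_rate_increasing (rc l1 l2 : R) : 0 < rc < l1 -> l1 < l2 ->
  decay_rate rc l1 < decay_rate rc l2.
Proof.
  intros h1 h2. unfold decay_rate.
  assert (ln (l1 / rc) < ln (l2 / rc)); [|lra].
  apply ln_increasing; [apply Rdiv_lt_0_compat; lra|].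
  unfold Rdiv. apply Rmult_lt_compat_r; [apply Rinv_0_lt_compat|]; lra.
Qed.

Lemma lattice_exp_bound (eps k B : R) (M : nat) (m : Z) : 0 < eps < 4 -> 0 <= k -> 0 <= B ->
  B * exp (- k * (Rabs (IZR m) - INR M)) <=
  B * exp (k * (INR M + 2)) * exp (- (k / 4) * Rabs (vpt eps m)).
Proof.
  intros heps hk hB. rewrite Rmult_assoc, <- exp_plus.
  apply Rmult_le_compat_l; [exact hB|]. apply exp_le_mono.
  assert (Rabs (vpt eps m) <= 4 * Rabs (IZR m) + 4).
  { unfold vpt. eapply Rle_trans; [apply Rabs_triang|].
    rewrite Rabs_mult, (Rabs_right 4), (Rabs_right eps) by lra. lra. }
  nra.
Qed.

Lemma eigenfunction_decay (rc eps lam : R) (psi : R -> Cx) :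
  0 < rc < lam -> 0 < eps < 4 -> in_l2 eps psi -> eigen_eq rc eps lam psi ->
  exists C, 0 < C /\ forall n : Z,
    Cmod (psi (vpt eps n)) <= C * exp (- decay_rate rc lam * Rabs (vpt eps n)).
Proof.
  intros hrl heps hl2 heig.
  pose proof (decay_rate_pos rc lam hrl) as hk. unfold decay_rate in *.
  destruct (nat_above (decay_radius rc lam / 4 + 1)) as [M hM].
  destruct (two_sided_decay (fun m => Cmod (psi (vpt eps m))) (ln (lam / rc)) M ltac:(lra))
    as [B [hB hbound]].
  - apply decay_right; auto. unfold vpt. rewrite <- INR_IZR_INZ. lra.
  - apply decay_left; auto. unfold vpt. rewrite opp_IZR, <- INR_IZR_INZ. lra.
  - exists (B * exp (ln (lam / rc) * (INR M + 2)) + 1).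
    split; [pose proof (exp_pos (ln (lam / rc) * (INR M + 2))); nra|].
    intro m. eapply Rle_trans; [apply hbound|].
    eapply Rle_trans; [apply (lattice_exp_bound eps); auto; lra|].
    apply Rmult_le_compat_r; [apply Rlt_le, exp_pos|lra].
Qed.

Theorem mainTheorem5 (rc : R) (hrc : 0 < rc) :
  (exists kappa : R -> R,
     (forall lam, rc < lam -> 0 < kappa lam) /\
     (forall l1 l2, rc < l1 -> l1 < l2 -> kappa l1 < kappa l2) /\
     (forall (eps : R), 0 < eps < 4 ->
      forall (lam : R) (psi : R -> Cx), rc < lam ->
        in_l2 eps psi -> nonzero_on eps psi -> eigen_eq rc eps lam psi ->
        exists C : R, 0 < C /\
          forall n : Z,
            Cmod (psi (vpt eps n)) <= C * exp (- kappa lam * Rabs (vpt eps n))))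
  /\
  (exists k : R -> R,
     forall (eps : R), 0 < eps < 4 ->
     forall (lam : R) (psi : R -> Cx), 0 < lam < rc ->
       eigen_eq rc eps lam psi ->
       exists (ap ap' am am' : Cx) (C V0 : R), 0 < C /\
         forall n : Z,
           (V0 < vpt eps n ->
              Cmod (Csub (psi (vpt eps n))
                     (Cadd (Cmul ap (Cexpi (k lam * vpt eps n)))
                           (Cmul ap' (Cexpi (- (k lam) * vpt eps n)))))
              <= C / Rabs (vpt eps n)) /\
           (vpt eps n < - V0 ->
              Cmod (Csub (psi (vpt eps n))
                     (Cadd (Cmul am (Cexpi (k lam * vpt eps n)))
                           (Cmul am' (Cexpi (- (k lam) * vpt eps n)))))
              <= C / Rabs (vpt eps n))).
Proof.
  split.
  - exists (decay_rate rc). split; [|split].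
    + intros lam h. apply decay_rate_pos. lra.
    + intros l1 l2 h1 h2. apply decay_rate_increasing; lra.
    (* The bound holds for every square-summable solution. *)
    + intros eps heps lam psi hlam hl2 _ heig. apply eigenfunction_decay; auto.
  - exists (osc_freq rc). intros eps heps lam psi hlam heig.
    apply eigenfunction_oscillation; auto.
Qed.
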